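(* For all integers $r, k \geq 2$, $$ P_r(k) \geq P_{r-1}(k) + f_{k,k+1}\big(P_r(k)\big). $$
   Context: A colour pattern on a vertex set $V$ is a sequence $G_1,\dots,G_r$ ($r\ge1$) of pairwise edge-disjoint graphs all having vertex set $V$; it is $K_{k+1}$-free if no $G_i$ contains $K_{k+1}$. Given a colour pattern $G_1,\dots,G_r$ on $V$ and a colouring $c: V \to [r]$, a strongly monochromatic $K_k$ is a set of $k$ vertices all receiving the same colour $i$ under $c$ and forming a clique in $G_i$. $P_r(k)$ is the smallest integer $n$ such that there exists a $K_{k+1}$-free colour pattern $G_1,\dots,G_r$ on an $n$-element vertex set $V$ such that every colouring $V \to [r]$ yields a strongly monochromatic $K_k$. For a graph $F$, the $k$-independence number $\alpha_k(F)$ is the largest size of a vertex subset of $F$ containing no $K_k$. The Erdős–Rogers function $f_{k,k+1}(n)$ is the minimum of $\alpha_k(F)$ over all $K_{k+1}$-free graphs $F$ on $n$ vertices. *)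

From mathcomp Require Import all_boot.
Set Implicit Arguments. Unset Strict Implicit. Unset Printing Implicit Defensive.

Definition simple_graph (V : finType) (E : {set V * V}) : bool :=
  [forall x : V, (x, x) \notin E] &&
  [forall x : V, forall y : V, ((x, y) \in E) ==> ((y, x) \in E)].

Definition is_clique (V : finType) (E : {set V * V}) (S : {set V}) : bool :=
  [forall x in S, forall y in S, (x != y) ==> ((x, y) \in E)].

Definition has_K (V : finType) (k : nat) (E : {set V * V}) : bool :=
  [exists S : {set V}, (#|S| == k) && is_clique E S].

Definition alpha_k (V : finType) (k : nat) (E : {set V * V}) : nat :=
  \max_(S : {set V} | ~~ [exists T : {set V},
        [&& T \subset S, #|T| == k & is_clique E T]]) #|S|.

Definition f_ER (k n : nat) : nat :=
  \big[minn/n]_(E : {set 'I_n * 'I_n} | simple_graph E && ~~ has_K k.+1 E)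
     alpha_k k E.

Definition Kfree_pattern (V : finType) (r k : nat) (G : 'I_r -> {set V * V}) : Prop :=
  (forall i, simple_graph (G i)) /\
  (forall i j, i != j -> [disjoint G i & G j]) /\
  (forall i, ~~ has_K k.+1 (G i)).

Definition forces_smono (V : finType) (r k : nat) (G : 'I_r -> {set V * V}) : Prop :=
  forall c : V -> 'I_r, exists (i : 'I_r) (S : {set V}),
    [/\ #|S| = k, (forall x, x \in S -> c x = i) & is_clique (G i) S].

Definition P_good (r k n : nat) : Prop :=
  exists G : 'I_r -> {set 'I_n * 'I_n}, @Kfree_pattern _ r k G /\ @forces_smono _ r k G.

Definition is_P (r k n : nat) : Prop :=
  P_good r k n /\ forall m, P_good r k m -> n <= m.

From mathcomp Require Import all_boot.

(* Take an optimal K_{k+1}-free pattern G_1, ..., G_r on n = P_r(k) vertices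
   and a largest set S spanning no K_k of G_r, so |S| >= f_{k,k+1}(n).
   The graphs G_1, ..., G_{r-1} restricted to the complement of S still force
   a strongly monochromatic K_k: extend any colouring of the complement by
   giving S the colour r; the forced K_k cannot have colour r, since it would
   lie in S. Hence P_{r-1}(k) <= n - |S|. *)

Set Implicit Arguments.
Unset Strict Implicit.
Unset Printing Implicit Defensive.

Definition pullback (V W : finType) (g : W -> V) (E : {set V * V}) : {set W * W} :=
  [set e | (g e.1, g e.2) \in E].

Definition has_K_in (V : finType) (k : nat) (E : {set V * V}) (S : {set V}) : bool :=
  [exists T : {set V}, [&& T \subset S, #|T| == k & is_clique E T]].

Lemma widen_ord_inj (m n : nat) (le_mn : m <= n) : injective (widen_ord le_mn).
Proof. by move=> i j /(congr1 val) ij; apply: val_inj. Qed.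

Section Pullback.

Variables (V W : finType) (g : W -> V).
Hypothesis g_inj : injective g.

Lemma simple_graph_pullback (E : {set V * V}) :
  simple_graph E -> simple_graph (pullback g E).
Proof.
case/andP=> /forallP irrE /forallP symE; apply/andP; split; apply/forallP=> x.
  by rewrite inE; apply: irrE.
by apply/forallP=> y; rewrite !inE; apply: (forallP (symE (g x))).
Qed.

Lemma disjoint_pullback (E F : {set V * V}) :
  [disjoint E & F] -> [disjoint pullback g E & pullback g F].
Proof.
move=> /pred0P EF; apply/pred0P=> e /=; rewrite !inE.
exact: (EF (g e.1, g e.2)).
Qed.

Lemma is_clique_pullback (E : {set V * V}) (T : {set W}) :
  is_clique (pullback g E) T = is_clique E (g @: T).
Proof.
apply/forallP/forallP=> [clT x | clgT x].
  apply/implyP=> /imsetP [a Ta ->]; apply/forallP=> y.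
  apply/implyP=> /imsetP [b Tb ->]; apply/implyP=> gab.
  have ab : a != b by apply: contraNneq gab => ->.
  by have := forallP (implyP (clT a) Ta) b; rewrite Tb ab inE.
apply/implyP=> Tx; apply/forallP=> y; apply/implyP=> Ty; apply/implyP=> xy.
have gxy : g x != g y by apply: contra xy => /eqP /g_inj ->.
have := forallP (implyP (clgT (g x)) (imset_f g Tx)) (g y).
by rewrite imset_f // gxy inE.
Qed.

Lemma has_K_pullback (k : nat) (E : {set V * V}) :
  has_K k (pullback g E) -> has_K k E.
Proof.
case/existsP=> T /andP [/eqP cardT clT]; apply/existsP; exists (g @: T).
by rewrite card_imset // cardT eqxx -is_clique_pullback.
Qed.

Lemma Kfree_pattern_pullback (r s k : nat) (G : 'I_r -> {set V * V})
    (h : 'I_s -> 'I_r) :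
  injective h -> Kfree_pattern k G ->
  Kfree_pattern k (fun i => pullback g (G (h i))).
Proof.
move=> h_inj [simpleG [disjG freeG]]; split; last split.
- by move=> i; apply: simple_graph_pullback.
- move=> i j ij; apply: disjoint_pullback; apply: disjG.
  by apply: contra ij => /eqP /h_inj ->.
- by move=> i; apply: contra (freeG (h i)); apply: has_K_pullback.
Qed.

End Pullback.

Section RestrictColours.

Variables (V W : finType) (r : nat) (g : W -> V).
Hypothesis g_inj : injective g.

Let widen_col : 'I_r -> 'I_r.+1 := widen_ord (leqnSn r).

Lemma widen_col_neq_max (i : 'I_r) : widen_col i != ord_max.
Proof. by rewrite -val_eqE /= neq_ltn ltn_ord. Qed.

Lemma widen_colP (i : 'I_r.+1) : i != ord_max -> {j : 'I_r | widen_col j = i}.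
Proof.
move=> i_max; have ltir : i < r.
  rewrite ltn_neqAle -ltnS ltn_ord andbT.
  by apply: contra i_max => /eqP ir; apply/eqP/val_inj.
by exists (Ordinal ltir); apply: val_inj.
Qed.

Definition extend_colouring (c : W -> 'I_r) (x : V) : 'I_r.+1 :=
  if [pick y | g y == x] is Some y then widen_col (c y) else ord_max.

Lemma extend_colouring_img (c : W -> 'I_r) (y : W) :
  extend_colouring c (g y) = widen_col (c y).
Proof.
by rewrite /extend_colouring; case: pickP => [z /eqP /g_inj -> | /(_ y)]; rewrite ?eqxx.
Qed.

Lemma extend_colouring_out (c : W -> 'I_r) (x : V) :
  x \notin codom g -> extend_colouring c x = ord_max.
Proof.
move=> x_out; rewrite /extend_colouring; case: pickP => // y /eqP gy.
by move: x_out; rewrite -gy codom_f.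
Qed.

Lemma forces_smono_restrict (k : nat) (G : 'I_r.+1 -> {set V * V}) (S : {set V}) :
  codom g =i ~: S -> ~~ has_K_in k (G ord_max) S -> forces_smono k G ->
  forces_smono k (fun i => pullback g (G (widen_col i))).
Proof.
move=> codom_g freeS forceG c.
have [i [T [cardT colT clT]]] := forceG (extend_colouring c).
have T_img x : x \in T -> i != ord_max -> x \in codom g.
  move=> Tx; apply: contraR => x_out.
  by rewrite -(colT x Tx) extend_colouring_out.
have [i_max | i_nmax] := eqVneq i ord_max.
  case/negP: freeS; apply/existsP; exists T; rewrite cardT eqxx -i_max clT !andbT.
  apply/subsetP=> x Tx; apply: contraT => x_out.
  have /codomP [y xE] : x \in codom g by rewrite codom_g inE.
  move: (colT _ Tx); rewrite xE extend_colouring_img i_max => /eqP.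
  by rewrite (negbTE (widen_col_neq_max _)).
have [j wj] := widen_colP i_nmax; subst i.
have T_eq : g @: (g @^-1: T) = T.
  apply/setP=> x; apply/imsetP/idP=> [[y] | Tx]; first by rewrite inE => Ty ->.
  have /codomP [y xE] := T_img x Tx i_nmax.
  by exists y; rewrite ?inE -xE.
exists j, (g @^-1: T); split.
- by rewrite -(card_imset _ g_inj) T_eq.
- move=> y; rewrite inE => /colT.
  by rewrite extend_colouring_img; apply: widen_ord_inj.
- by rewrite is_clique_pullback // T_eq.
Qed.

End RestrictColours.

Lemma bigmin_le_seq (I : eqType) (s : seq I) (P : pred I) (F : I -> nat) d x :
  x \in s -> P x -> \big[minn/d]_(i <- s | P i) F i <= F x.
Proof.
elim: s => [//|a s IHs]; rewrite inE big_cons => /orP [/eqP <- -> | s_x Px].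
  exact: geq_minl.
by case: (P a); [apply: leq_trans (geq_minr _ _) (IHs s_x Px) | apply: IHs].
Qed.

Lemma f_ER_le_alpha_k (k n : nat) (E : {set 'I_n * 'I_n}) :
  simple_graph E -> ~~ has_K k.+1 E -> f_ER k n <= alpha_k k E.
Proof.
by move=> simpleE freeE; apply: bigmin_le_seq; rewrite ?mem_index_enum ?simpleE.
Qed.

Lemma alpha_k_witness (V : finType) (k : nat) (E : {set V * V}) :
  0 < k -> {S : {set V} | ~~ has_K_in k E S & alpha_k k E = #|S|}.
Proof.
move=> k_gt0; apply: eq_bigmax_cond; apply/card_gt0P; exists set0.
apply/existsP=> [[T /and3P []]]; rewrite subset0 => /eqP -> /eqP.
by rewrite cards0 => k0; rewrite -k0 in k_gt0.
Qed.

Theorem proposition3p2 (r k : nat) (hr : 2 <= r) (hk : 2 <= k) (n m : nat) :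
  is_P r k n -> is_P r.-1 k m -> m + f_ER k n <= n.
Proof.
case: r hr => [// | r] _ [[G [patG forceG]] _] [_ minm] /=.
have [S freeS alphaS] := alpha_k_witness (G ord_max) (ltnW hk).
have fS : f_ER k n <= #|S|.
  by rewrite -alphaS; case: patG => simpleG [_ freeG]; apply: f_ER_le_alpha_k.
pose g := @enum_val _ (mem (~: S)).
have g_inj : injective g := @enum_val_inj _ _.
have codom_g : codom g =i ~: S.
  move=> x; apply/codomP/idP=> [[y ->] | Sx]; first exact: enum_valP.
  by exists (enum_rank_in Sx x); rewrite /g enum_rankK_in.
have mS : m <= #|~: S|.
  apply: minm; exists (fun i => pullback g (G (widen_ord (leqnSn r) i))); split.
    exact: Kfree_pattern_pullback (@widen_ord_inj _ _ _) patG.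
  exact: forces_smono_restrict.
rewrite cardsCs setCK card_ord in mS.
have S_le_n : #|S| <= n by rewrite -[X in _ <= X]card_ord max_card.
by apply: leq_trans (leq_add mS fS) _; rewrite subnK.
Qed.
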